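(* Let $(S,+)$ be an infinite semigroup which is left weakly cancellative and has no idempotent element. Let $A\subseteq S$ be an IP set. Then $A$ can be partitioned into countably infinitely many pairwise disjoint sets, each of which is an IP set in $S$.
   Context: A semigroup $(S,+)$ is left weakly cancellative if for all $a,b\in S$ the set $\{x\in S: a+x=b\}$ is finite. An element $e$ is idempotent if $e+e=e$. For a sequence $\langle x_n\rangle_{n=1}^\infty$ in $S$, $\mathrm{FS}(\langle x_n\rangle_{n=1}^\infty)=\{\sum_{n\in H}x_n : H\text{ a nonempty finite subset of }\mathbb{N}\}$, where sums are taken in increasing order of indices. A set $A\subseteq S$ is an IP set if there is a sequence $\langle x_n\rangle_{n=1}^\infty$ in $S$ with $\mathrm{FS}(\langle x_n\rangle_{n=1}^\infty)\subseteq A$. *)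

From Stdlib Require Import List Sorted Arith.
Import ListNotations.

Definition finite_set {S : Type} (P : S -> Prop) : Prop :=
  exists l : list S, forall x, P x -> In x l.

Definition infinite_type (S : Type) : Prop := ~ finite_set (fun _ : S => True).

Definition associative_op {S : Type} (op : S -> S -> S) : Prop :=
  forall a b c, op a (op b c) = op (op a b) c.

Definition left_weakly_cancellative {S : Type} (op : S -> S -> S) : Prop :=
  forall a b : S, finite_set (fun x => op a x = b).

Definition idempotent {S : Type} (op : S -> S -> S) (e : S) : Prop := op e e = e.

Fixpoint fsum {S : Type} (op : S -> S -> S) (x : nat -> S) (h : nat) (t : list nat) : S :=
  match t with
  | [] => x h
  | h' :: t' => op (x h) (fsum op x h' t')
  end.

(* FS(<x_n>) : sums over nonempty finite H ⊆ N, taken in increasing order of indices;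
   H is represented by its strictly increasing enumeration h :: t. *)
Definition FS {S : Type} (op : S -> S -> S) (x : nat -> S) (s : S) : Prop :=
  exists (h : nat) (t : list nat), Sorted lt (h :: t) /\ s = fsum op x h t.

Definition IP_set {S : Type} (op : S -> S -> S) (A : S -> Prop) : Prop :=
  exists x : nat -> S, forall s, FS op x s -> A s.

From Stdlib Require Import List Sorted Arith Lia Classical IndefiniteDescription Cantor FinFun.
Import ListNotations.

(* Starting from x with FS(x) contained in A, choose sums y_k of x over finite blocks of
   indices H_0 < H_1 < ..., so that FS(y) is contained in FS(x).  Each y_k is chosen
   outside FS(y_0, ..., y_(k-1)) and outside the set of solutions v of a + v = s with
   a, s in that finite set.  This is possible: by left weak cancellativity only finitely
   many elements are excluded, whereas the block sums of x beyond any index form an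
   infinite set -- otherwise some x_j recurs infinitely often, its multiples lie in a
   finite set, and a repetition among them yields an idempotent.  As a result, elements of
   FS(y) represented with different largest indices are different.  Splitting N into
   infinitely many infinite sets I_n (Cantor pairing), the sets FS(y restricted to I_n)
   are pairwise disjoint IP subsets of A; the rest of A joins the first of them. *)

Lemma StronglySorted_app_iff {A : Type} (R : A -> A -> Prop) (l1 l2 : list A) :
  StronglySorted R (l1 ++ l2) <->
  StronglySorted R l1 /\ StronglySorted R l2 /\ (forall a b, In a l1 -> In b l2 -> R a b).
Proof.
  induction l1 as [|a l1 IH]; simpl.
  - split; [|tauto]. intros H; repeat split; [constructor|exact H|contradiction].
  - split.
    + intros [Hs Ha]%StronglySorted_inv. apply IH in Hs as (H1 & H2 & H12).
      apply Forall_app in Ha as [Ha1 Ha2]. rewrite Forall_forall in Ha2.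
      repeat split; auto. { constructor; auto. }
      intros a' b [<-|Ha'] Hb; auto.
    + intros ([H1 Ha1]%StronglySorted_inv & H2 & H12). constructor.
      * apply IH; auto.
      * apply Forall_app; split; auto. apply Forall_forall; auto.
Qed.

Lemma Sorted_lt_StronglySorted (l : list nat) : Sorted lt l <-> StronglySorted lt l.
Proof.
  split; [apply Sorted_StronglySorted; exact Nat.lt_trans | apply StronglySorted_Sorted].
Qed.

Lemma Sorted_lt_app_iff (l1 l2 : list nat) :
  Sorted lt (l1 ++ l2) <->
  Sorted lt l1 /\ Sorted lt l2 /\ (forall a b, In a l1 -> In b l2 -> a < b).
Proof. rewrite !Sorted_lt_StronglySorted. apply StronglySorted_app_iff. Qed.

Lemma Sorted_lt_cons_snoc (h : nat) (t : list nat) : Sorted lt (h :: t) ->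
  t = [] \/ exists t' k, t = t' ++ [k] /\ Sorted lt (h :: t') /\
                         (forall z, In z (h :: t') -> z < k).
Proof.
  intros Hs. destruct t as [|a t]; [now left|right].
  destruct (exists_last (l := a :: t) ltac:(discriminate)) as [t' [k E]].
  rewrite E in Hs |- *. exists t', k. split; [reflexivity|].
  change (h :: t' ++ [k]) with ((h :: t') ++ [k]) in Hs.
  apply Sorted_lt_app_iff in Hs as (Hs & _ & Hk). split; auto.
  intros z Hz. apply Hk; simpl; auto.
Qed.

Lemma Sorted_lt_le_last (h : nat) (t : list nat) : Sorted lt (h :: t) ->
  forall z, In z (h :: t) -> z <= last t h.
Proof.
  intros Hs z Hz. destruct (Sorted_lt_cons_snoc h t Hs) as [->|(t' & k & -> & _ & Hk)].
  - destruct Hz as [<-|[]]. reflexivity.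
  - rewrite last_last. change (h :: t' ++ [k]) with ((h :: t') ++ [k]) in Hz.
    apply in_app_or in Hz as [Hz|[<-|[]]]; [apply Nat.lt_le_incl|]; auto.
Qed.

Lemma Sorted_lt_head_le (h : nat) (t : list nat) : Sorted lt (h :: t) ->
  forall z, In z (h :: t) -> h <= z.
Proof.
  intros Hs z [<-|Hz]; [reflexivity|].
  apply (Sorted_lt_app_iff [h] t) in Hs as (_ & _ & Hh).
  apply Nat.lt_le_incl, Hh; simpl; auto.
Qed.

Lemma Sorted_lt_map (g : nat -> nat) : (forall i j, i < j -> g i < g j) ->
  forall l, Sorted lt l -> Sorted lt (map g l).
Proof.
  intros Hg l H. induction H as [|a l H IH Hd]; simpl; constructor; auto.
  destruct Hd; simpl; constructor; auto.
Qed.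

Lemma last_map {A B : Type} (g : A -> B) (t : list A) (h : A) :
  last (map g t) (g h) = g (last t h).
Proof.
  revert h. induction t as [|a t IH]; intros h; [reflexivity|].
  destruct t as [|b t]; [reflexivity|]. exact (IH h).
Qed.

Section FiniteSets.
Context {T : Type}.

Lemma finite_set_subset (P Q : T -> Prop) :
  (forall s, P s -> Q s) -> finite_set Q -> finite_set P.
Proof. intros HPQ [l Hl]. exists l. auto. Qed.

Lemma finite_set_In (l : list T) : finite_set (fun s => In s l).
Proof. exists l. auto. Qed.

Lemma finite_set_union (P Q : T -> Prop) :
  finite_set P -> finite_set Q -> finite_set (fun s => P s \/ Q s).
Proof.
  intros [l1 H1] [l2 H2]. exists (l1 ++ l2). intros s [Hs|Hs]; apply in_or_app; auto.
Qed.

Lemma finite_set_exists_In {A : Type} (l : list A) (P : A -> T -> Prop) :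
  (forall a, finite_set (P a)) -> finite_set (fun s => exists a, In a l /\ P a s).
Proof.
  intros HP. induction l as [|a l IH].
  - exists []. intros s (a & [] & _).
  - apply finite_set_subset with (fun s => P a s \/ exists a', In a' l /\ P a' s).
    + intros s (a' & [<-|Ha'] & Hs); eauto.
    + apply finite_set_union; auto.
Qed.

Lemma not_finite_set_diff (P Q : T -> Prop) :
  ~ finite_set P -> finite_set Q -> exists s, P s /\ ~ Q s.
Proof.
  intros HP HQ. apply NNPP. intros Hn. apply HP, finite_set_subset with Q; auto.
  intros s Hs. apply NNPP. eauto.
Qed.

Lemma injective_range_not_finite (g : nat -> T) :
  Injective g -> ~ finite_set (fun s => exists k, g k = s).
Proof.
  intros Hg [l Hl].
  assert (Hlen : length (map g (seq 0 (S (length l)))) <= length l).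
  { apply NoDup_incl_length.
    - apply Injective_map_NoDup; [exact Hg | apply seq_NoDup].
    - intros s (k & <- & _)%in_map_iff. eauto. }
  rewrite length_map, length_seq in Hlen. lia.
Qed.

Lemma finite_range_frequent_value (f : nat -> T) (N : nat) :
  finite_set (fun s => exists j, N <= j /\ f j = s) ->
  exists c, forall M, exists j, M <= j /\ f j = c.
Proof.
  intros [l Hl]. revert N Hl. induction l as [|a l IH]; intros N Hl.
  - destruct (Hl (f N)) as []. eauto.
  - destruct (classic (forall M, exists j, M <= j /\ f j = a)) as [Ha|Ha]; [eauto|].
    apply not_all_ex_not in Ha as [M HM].
    apply (IH (max N M)). intros s (j & Hj & <-).
    destruct (Hl (f j)) as [E|E]; [exists j; split; [lia|auto] | |auto].
    exfalso. apply HM. exists j. split; [lia|auto].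
Qed.

End FiniteSets.

Section Multiples.
Context {T : Type} (op : T -> T -> T).
Hypothesis op_assoc : associative_op op.

(* [nmul k c] is the sum of [k + 1] copies of [c]: a semigroup has no empty sum. *)
Fixpoint nmul (k : nat) (c : T) : T :=
  match k with 0 => c | S k => op c (nmul k c) end.

Lemma nmul_add (a b : nat) (c : T) : op (nmul a c) (nmul b c) = nmul (a + b + 1) c.
Proof.
  induction a as [|a IH]; simpl.
  - now rewrite Nat.add_1_r.
  - now rewrite <- op_assoc, IH.
Qed.

Lemma nmul_periodic (a p : nat) (c : T) : nmul a c = nmul (a + p) c ->
  forall r n, a <= n -> nmul n c = nmul (n + r * p) c.
Proof.
  intros E.
  assert (Hshift : forall n, a <= n -> nmul n c = nmul (n + p) c).
  { intros n Hn. replace n with ((n - a) + a) by lia. rewrite <- Nat.add_assoc.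
    induction (n - a) as [|t IH]; simpl; congruence. }
  induction r as [|r IH]; intros n Hn; [now rewrite Nat.add_0_r|].
  rewrite IH, Hshift by lia. f_equal. lia.
Qed.

Hypothesis no_idempotent : forall e, ~ idempotent op e.

Lemma nmul_injective (c : T) : Injective (fun k => nmul k c).
Proof.
  assert (Hlt : forall a p, 0 < p -> nmul a c <> nmul (a + p) c).
  { intros a p Hp E.
    (* [n + 1] is a multiple of the period [p], so [nmul n c] is idempotent. *)
    set (n := (a + 1) * p - 1).
    apply (no_idempotent (nmul n c)). unfold idempotent.
    rewrite nmul_add, (nmul_periodic a p c E (a + 1) n) by nia. f_equal. nia. }
  intros a b E. simpl in E.
  destruct (Nat.lt_total a b) as [Hab|[Hab|Hab]]; [exfalso| exact Hab |exfalso].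
  - apply (Hlt a (b - a)); [lia|]. now replace (a + (b - a)) with b by lia.
  - apply (Hlt b (a - b)); [lia|]. now replace (b + (a - b)) with a by lia.
Qed.

End Multiples.

Section FiniteSums.
Context {T : Type} (op : T -> T -> T).

Definition FS_from (x : nat -> T) (N : nat) (s : T) : Prop :=
  exists h t, Sorted lt (h :: t) /\ N <= h /\ s = fsum op x h t.

Lemma fsum_map (x : nat -> T) (g : nat -> nat) (h : nat) (t : list nat) :
  fsum op (fun i => x (g i)) h t = fsum op x (g h) (map g t).
Proof.
  revert h. induction t as [|a t IH]; intros h; simpl; [reflexivity|]. now rewrite IH.
Qed.

Hypothesis op_assoc : associative_op op.

Lemma fsum_app (x : nat -> T) (h h' : nat) (t t' : list nat) :
  fsum op x h (t ++ h' :: t') = op (fsum op x h t) (fsum op x h' t').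
Proof.
  revert h. induction t as [|a t IH]; intros h; simpl; [reflexivity|].
  now rewrite IH, op_assoc.
Qed.

Lemma FS_from_nmul (x : nat -> T) (c : T) :
  (forall M, exists j, M <= j /\ x j = c) -> forall k N, FS_from x N (nmul op k c).
Proof.
  intros Hc k. induction k as [|k IH]; intros N; destruct (Hc N) as (j & Hj & <-).
  - exists j, []. repeat split; auto.
  - destruct (IH (S j)) as (h & t & Hs & Hh & E).
    exists j, (h :: t). split; [|split; [exact Hj | simpl; now rewrite E]].
    constructor; auto.
Qed.

Hypothesis no_idempotent : forall e, ~ idempotent op e.

Lemma FS_from_not_finite (x : nat -> T) (N : nat) : ~ finite_set (FS_from x N).
Proof.
  intros Hfin.
  destruct (finite_range_frequent_value x N) as [c Hc].
  { eapply finite_set_subset; [|exact Hfin]. intros s (j & Hj & <-).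
    exists j, []. repeat split; auto. }
  apply (injective_range_not_finite _ (nmul_injective op op_assoc no_idempotent c)).
  eapply finite_set_subset; [|exact Hfin]. intros s (k & <-). now apply FS_from_nmul.
Qed.

End FiniteSums.

Section Construction.
Context {T : Type} (op : T -> T -> T).
Hypothesis op_assoc : associative_op op.
Hypothesis op_lwc : left_weakly_cancellative op.
Hypothesis no_idempotent : forall e, ~ idempotent op e.

Definition blocked (old : list T) (v : T) : Prop :=
  In v old \/ exists a, In a old /\ In (op a v) old.

Lemma blocked_finite (old : list T) : finite_set (blocked old).
Proof.
  apply finite_set_union; [apply finite_set_In|].
  apply finite_set_exists_In. intros a.
  apply finite_set_subset with (fun v => exists c, In c old /\ op a v = c).
  - intros v Hv. eauto.
  - apply finite_set_exists_In. intros c. apply op_lwc.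
Qed.

Variable x : nat -> T.

Definition good_block (N : nat) (old : list T) (b : nat * list nat) : Prop :=
  Sorted lt (fst b :: snd b) /\ N <= fst b /\ ~ blocked old (fsum op x (fst b) (snd b)).

Lemma good_block_exists (N : nat) (old : list T) : exists b, good_block N old b.
Proof.
  destruct (not_finite_set_diff _ _ (FS_from_not_finite op op_assoc no_idempotent x N)
              (blocked_finite old)) as (v & (h & t & Hs & Hh & ->) & Hv).
  now exists (h, t).
Qed.

Definition next_block (N : nat) (old : list T) : nat * list nat :=
  proj1_sig (constructive_indefinite_description _ (good_block_exists N old)).

(* [stage k] is the pair ([bound k], [sums k]): [sums k] lists FS(y_0, ..., y_(k-1))
   and [bound k] exceeds every index of [x] used by y_0, ..., y_(k-1). *)
Fixpoint stage (k : nat) : nat * list T :=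
  match k with
  | 0 => (0, [])
  | S k => let b := next_block (fst (stage k)) (snd (stage k)) in
           let v := fsum op x (fst b) (snd b) in
           (S (list_max (fst b :: snd b)),
            snd (stage k) ++ v :: map (fun a => op a v) (snd (stage k)))
  end.

Definition bound (k : nat) : nat := fst (stage k).
Definition sums (k : nat) : list T := snd (stage k).
Definition block (k : nat) : nat * list nat := next_block (bound k) (sums k).
Definition y (k : nat) : T := fsum op x (fst (block k)) (snd (block k)).

Lemma block_good (k : nat) : good_block (bound k) (sums k) (block k).
Proof. exact (proj2_sig (constructive_indefinite_description _ _)). Qed.

Lemma sums_succ (k : nat) :
  sums (S k) = sums k ++ y k :: map (fun a => op a (y k)) (sums k).
Proof. reflexivity. Qed.

Lemma block_lt_bound_succ (k z : nat) :
  In z (fst (block k) :: snd (block k)) -> z < bound (S k).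
Proof.
  intros Hz. change (bound (S k)) with (S (list_max (fst (block k) :: snd (block k)))).
  apply Nat.lt_succ_r.
  pose proof (proj1 (list_max_le (fst (block k) :: snd (block k)) _) (le_n _)) as Hmax.
  rewrite Forall_forall in Hmax. exact (Hmax z Hz).
Qed.

Lemma bound_le (i j : nat) : i <= j -> bound i <= bound j.
Proof.
  induction 1 as [|j _ IH]; [reflexivity|].
  destruct (block_good j) as (_ & Hj & _).
  pose proof (block_lt_bound_succ j _ (or_introl eq_refl)). lia.
Qed.

Lemma sums_complete (k h : nat) (t : list nat) : Sorted lt (h :: t) ->
  (forall z, In z (h :: t) -> z < k) -> In (fsum op y h t) (sums k).
Proof.
  revert h t. induction k as [|k IH]; intros h t Hs Hk.
  { specialize (Hk h (or_introl eq_refl)). lia. }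
  rewrite sums_succ. apply in_or_app.
  destruct (Sorted_lt_cons_snoc h t Hs) as [->|(t' & j & -> & Hs' & Hj)].
  - specialize (Hk h (or_introl eq_refl)).
    destruct (Nat.eq_dec h k) as [->|Hne]; [right; now left|left].
    apply IH; auto. intros z [<-|[]]. lia.
  - assert (Hjk : j < S k) by (apply Hk; right; apply in_or_app; right; now left).
    destruct (Nat.eq_dec j k) as [->|Hne].
    + right; right. rewrite fsum_app by exact op_assoc.
      apply (in_map (fun a => op a (y k))), IH; auto.
    + left. apply IH; [exact Hs|]. intros z Hz.
      change (h :: t' ++ [j]) with ((h :: t') ++ [j]) in Hz.
      apply in_app_or in Hz as [Hz|[<-|[]]]; [specialize (Hj z Hz)|]; lia.
Qed.

Lemma fsum_notin_sums (h : nat) (t : list nat) : Sorted lt (h :: t) ->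
  ~ In (fsum op y h t) (sums (last t h)).
Proof.
  intros Hs. destruct (Sorted_lt_cons_snoc h t Hs) as [->|(t' & k & -> & Hs' & Hk)].
  - destruct (block_good h) as (_ & _ & Hb). intros Hin. apply Hb. now left.
  - rewrite last_last, fsum_app by exact op_assoc.
    destruct (block_good k) as (_ & _ & Hb). intros Hin. apply Hb. right.
    exists (fsum op y h t'). split; [|exact Hin]. now apply sums_complete.
Qed.

Lemma fsum_neq_of_last_neq (h1 h2 : nat) (t1 t2 : list nat) :
  Sorted lt (h1 :: t1) -> Sorted lt (h2 :: t2) -> last t1 h1 <> last t2 h2 ->
  fsum op y h1 t1 <> fsum op y h2 t2.
Proof.
  assert (Hlt : forall h1 h2 t1 t2, Sorted lt (h1 :: t1) -> Sorted lt (h2 :: t2) ->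
            last t2 h2 < last t1 h1 -> fsum op y h1 t1 <> fsum op y h2 t2).
  { intros h1' h2' t1' t2' S1 S2 L E. apply (fsum_notin_sums h1' t1' S1).
    rewrite E. apply sums_complete; [exact S2|]. intros z Hz.
    pose proof (Sorted_lt_le_last h2' t2' S2 z Hz). lia. }
  intros S1 S2 Hne. destruct (proj1 (Nat.lt_gt_cases _ _) Hne) as [L|L].
  - intros E. exact (Hlt h2 h1 t2 t1 S2 S1 L (eq_sym E)).
  - exact (Hlt h1 h2 t1 t2 S1 S2 L).
Qed.

Lemma fsum_y_FS_from (h : nat) (t : list nat) : Sorted lt (h :: t) ->
  FS_from op x (bound h) (fsum op y h t).
Proof.
  revert h. induction t as [|a t IH]; intros h Hs;
    destruct (block_good h) as (Hb & Hbh & _).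
  { exists (fst (block h)), (snd (block h)). auto. }
  apply Sorted_inv in Hs as [Hs Hha%HdRel_inv].
  destruct (IH a Hs) as (h' & t' & Hs' & Hh' & E).
  exists (fst (block h)), (snd (block h) ++ h' :: t'). split; [|split; [exact Hbh|]].
  - change (fst (block h) :: snd (block h) ++ h' :: t')
      with ((fst (block h) :: snd (block h)) ++ h' :: t').
    apply Sorted_lt_app_iff. split; [exact Hb|split; [exact Hs'|]]. intros z w Hz Hw.
    pose proof (block_lt_bound_succ h z Hz). pose proof (bound_le (S h) a Hha).
    pose proof (Sorted_lt_head_le h' t' Hs' w Hw). lia.
  - simpl. rewrite E, fsum_app by exact op_assoc. reflexivity.
Qed.

End Construction.

Lemma to_nat_lt_r (n i j : nat) : i < j -> Cantor.to_nat (n, i) < Cantor.to_nat (n, j).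
Proof.
  intros Hij. pose proof (Cantor.to_nat_spec n i). pose proof (Cantor.to_nat_spec n j). nia.
Qed.

Lemma IP_set_disjoint_IP_subsets {T : Type} (op : T -> T -> T)
  (op_assoc : associative_op op) (op_lwc : left_weakly_cancellative op)
  (no_idempotent : forall e, ~ idempotent op e) (A : T -> Prop) :
  IP_set op A ->
  exists C : nat -> T -> Prop,
    (forall n s, C n s -> A s) /\
    (forall m n s, m <> n -> C m s -> C n s -> False) /\
    (forall n, IP_set op (C n)).
Proof.
  intros [x Hx].
  set (y' := y op op_assoc op_lwc no_idempotent x).
  set (g n j := Cantor.to_nat (n, j)).
  assert (Hsum : forall n h t, Sorted lt (h :: t) ->
            Sorted lt (g n h :: map (g n) t) /\
            fsum op (fun j => y' (g n j)) h t = fsum op y' (g n h) (map (g n) t)).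
  { intros n h t Hs. split; [exact (Sorted_lt_map _ (to_nat_lt_r n) (h :: t) Hs)|].
    apply fsum_map. }
  exists (fun n => FS op (fun j => y' (g n j))). split; [|split].
  - intros n s (h & t & Hs & ->). destruct (Hsum n h t Hs) as [Hs' ->]. apply Hx.
    destruct (fsum_y_FS_from op op_assoc op_lwc no_idempotent x _ _ Hs')
      as (h' & t' & Hs'' & _ & E).
    exists h', t'. split; assumption.
  - intros m n s Hmn (h1 & t1 & S1 & ->) (h2 & t2 & S2 & E).
    destruct (Hsum m h1 t1 S1) as [S1' E1], (Hsum n h2 t2 S2) as [S2' E2].
    rewrite E1, E2 in E. revert E.
    apply (fsum_neq_of_last_neq op op_assoc op_lwc no_idempotent x _ _ _ _ S1' S2').
    rewrite !last_map. unfold g. intros Heq%Cantor.to_nat_inj. injection Heq as Heq.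
    exact (Hmn Heq).
  - intros n. now exists (fun j => y' (g n j)).
Qed.

Lemma IP_set_superset {T : Type} (op : T -> T -> T) (D D' : T -> Prop) :
  (forall s, D s -> D' s) -> IP_set op D -> IP_set op D'.
Proof. intros HD [x Hx]. exists x. auto. Qed.

Lemma partition_of_disjoint_family {T : Type} (P : (T -> Prop) -> Prop)
  (A : T -> Prop) (C : nat -> T -> Prop) :
  (forall D D', (forall s, D s -> D' s) -> P D -> P D') ->
  (forall n s, C n s -> A s) ->
  (forall m n s, m <> n -> C m s -> C n s -> False) ->
  (forall n, P (C n)) ->
  exists B : nat -> T -> Prop,
    (forall s, A s <-> exists n, B n s) /\
    (forall m n s, m <> n -> B m s -> B n s -> False) /\
    (forall n, P (B n)).
Proof.
  intros Hmono CA Cdisj CP.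
  exists (fun n s => C n s \/ (n = 0 /\ A s /\ ~ exists m, C m s)). split; [|split].
  - intros s; split.
    + intros Hs. destruct (classic (exists m, C m s)) as [[m Hm]|Hn]; eauto.
    + intros [n [Hc|(_ & Ha & _)]]; eauto.
  - intros m n s Hmn [Hm|(-> & _ & Hm)] [Hn|(-> & _ & Hn)]; eauto.
  - intros n. apply (Hmono (C n)); auto.
Qed.

Theorem theorem2p1 (S : Type) (op : S -> S -> S)
  (Hassoc : associative_op op)
  (Hinf : infinite_type S)
  (Hlwc : left_weakly_cancellative op)
  (Hnoid : forall e : S, ~ idempotent op e)
  (A : S -> Prop) (HA : IP_set op A) :
  exists B : nat -> S -> Prop,
    (forall s, A s <-> exists n, B n s) /\
    (forall m n s, m <> n -> B m s -> B n s -> False) /\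
    (forall n, IP_set op (B n)).
Proof.
  destruct (IP_set_disjoint_IP_subsets op Hassoc Hlwc Hnoid A HA) as (C & CA & Cdisj & CIP).
  exact (partition_of_disjoint_family (IP_set op) A C (IP_set_superset op) CA Cdisj CIP).
Qed.
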